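(* Let $X$ be a bounded chain and $H\colon X^*\to X\cup\{\varepsilon\}$ an $\varepsilon$-standard operation. The following are equivalent. (i) (a) $H$ is associative; (b) $H_2(H_1(x),H_1(x))=H_1(x)$ for every $x\in X$; (c) $H_1$ and $H_2$ are nondecreasing in each argument; (d) the sets $H_1(X)$, $H_2(X,z)=\{H_2(x,z):x\in X\}$ and $H_2(z,X)=\{H_2(z,x):x\in X\}$ are convex for every $z\in X$. (ii) (a) $H$ is associative; (b) $H$ is range-idempotent; (c) for every $n\geqslant 1$, $H_n$ is nondecreasing in each argument; (d) for every $n\geqslant 1$, every $0\leqslant i\leqslant n-1$, every $\mathbf{y}\in X^i$ and $\mathbf{z}\in X^{n-1-i}$, the set $\{H_n(\mathbf{y},x,\mathbf{z}):x\in X\}$ is convex. (iii) There exist $a,b,c,d\in X$ with $a\leqslant c\wedge d$ and $c\vee d\leqslant b$ such that for every $n\geqslant 1$, $$H_n(x_1,\ldots,x_n)=\mathrm{med}\Big(a,\,(c\wedge x_1)\vee\mathrm{med}\Big(\bigwedge_{i=1}^n x_i,\,c\wedge d,\,\bigvee_{i=1}^n x_i\Big)\vee(d\wedge x_n),\,b\Big).$$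
   Context: $X^*=\bigcup_{n\geqslant 0}X^n$ is the set of finite tuples over $X$, $X^0=\{\varepsilon\}$ with $\varepsilon\notin X$ the empty tuple; $H(\mathbf{x},\mathbf{y})$ denotes $H$ applied to the concatenation, concatenation with $\varepsilon$ leaving tuples unchanged. $H_n=H|_{X^n}$, $H^{\flat}=H|_{X^*\setminus\{\varepsilon\}}$. $H$ is $\varepsilon$-standard if $H(\varepsilon)=\varepsilon$ and $H(\mathbf{x})\neq\varepsilon$ for $\mathbf{x}\neq\varepsilon$. $H$ is associative if $H(\mathbf{x},\mathbf{y},\mathbf{z})=H(\mathbf{x},H(\mathbf{y}),\mathbf{z})$ for all tuples (a value $\varepsilon$ treated as the empty tuple). $H$ is range-idempotent if $H(x,\ldots,x)=x$ ($k$ copies) for every $x\in\mathrm{ran}(H^{\flat})$ and every $k\geqslant 1$. In the chain $X$, $\wedge$ and $\vee$ denote min and max, and $\mathrm{med}(x,y,z)=(x\vee y)\wedge(y\vee z)\wedge(z\vee x)$. A subset $S$ of a chain is convex if $s,s'\in S$ and $s<t<s'$ imply $t\in S$. *)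

From mathcomp Require Import all_boot all_order.
Set Implicit Arguments. Unset Strict Implicit. Unset Printing Implicit Defensive.
Import Order.TTheory.
Local Open Scope order_scope.

(* Tuples over X are [seq X]; the empty tuple epsilon is [::].
   An operation H : X^* -> X \cup {epsilon} is modelled as [seq X -> option X],
   where [None] stands for the value epsilon. *)

Definition otup (T : Type) (o : option T) : seq T :=
  if o is Some v then [:: v] else [::].

Definition eps_standard (T : Type) (H : seq T -> option T) : Prop :=
  H [::] = None /\ forall s : seq T, s <> [::] -> H s <> None.

Definition associative_op (T : Type) (H : seq T -> option T) : Prop :=
  forall x y z : seq T, H (x ++ y ++ z) = H (x ++ otup (H y) ++ z).

Definition range_idempotent (T : Type) (H : seq T -> option T) : Prop :=
  forall v : T, (exists s : seq T, s <> [::] /\ H s = Some v) ->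
  forall k : nat, 0 < k -> H (nseq k v) = Some v.

Definition convex_set (d : Order.disp_t) (X : orderType d) (S : X -> Prop) : Prop :=
  forall s s' t : X, S s -> S s' -> s < t -> t < s' -> S t.

Definition nondecr_all (d : Order.disp_t) (X : orderType d) (H : seq X -> option X) : Prop :=
  forall (y z : seq X) (x x' v v' : X), x <= x' ->
    H (y ++ x :: z) = Some v -> H (y ++ x' :: z) = Some v' -> v <= v'.

Definition section_set (X : Type) (H : seq X -> option X) (y z : seq X) : X -> Prop :=
  fun t => exists x : X, H (y ++ x :: z) = Some t.

Definition med (d : Order.disp_t) (X : orderType d) (x y z : X) : X :=
  (x `|` y) `&` (y `|` z) `&` (z `|` x).

Definition condition_i (d : Order.disp_t) (X : tbOrderType d) (H : seq X -> option X) : Prop :=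
  [/\ associative_op H,
      (forall x v : X, H [:: x] = Some v -> H [:: v; v] = Some v),
      [/\ (forall x x' v v' : X, x <= x' -> H [:: x] = Some v -> H [:: x'] = Some v' -> v <= v'),
          (forall x x' z v v' : X, x <= x' -> H [:: x; z] = Some v -> H [:: x'; z] = Some v' -> v <= v') &
          (forall x x' z v v' : X, x <= x' -> H [:: z; x] = Some v -> H [:: z; x'] = Some v' -> v <= v')] &
      [/\ convex_set (section_set H [::] [::]),
          (forall z : X, convex_set (section_set H [::] [:: z])) &
          (forall z : X, convex_set (section_set H [:: z] [::]))]].

Definition condition_ii (d : Order.disp_t) (X : tbOrderType d) (H : seq X -> option X) : Prop :=
  [/\ associative_op H, range_idempotent H, nondecr_all H &
      forall y z : seq X, convex_set (section_set H y z)].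

Definition condition_iii (d : Order.disp_t) (X : tbOrderType d) (H : seq X -> option X) : Prop :=
  exists a b c e : X, [/\ a <= c `&` e, c `|` e <= b &
    forall (x1 : X) (t : seq X),
      H (x1 :: t) = Some (med a
        ((c `&` x1) `|` med (\meet_(x <- x1 :: t) x) (c `&` e) (\join_(x <- x1 :: t) x)
                     `|` (e `&` last x1 t)) b)].

(* On a chain, B(x, y) = (c ∧ x) ∨ (x ∧ y) ∨ (d ∧ y) is associative and idempotent, and the
   formula of (iii) reads H_n(x) = med(a, B(..B(B(x1, x2), x3).., xn), b).  Clamping to [a, b]
   can be moved inside B, which gives associativity, and every section x ↦ H_n(y, x, z) is
   itself a clamp x ↦ med(p, x, q), hence nondecreasing with convex range: (iii) ⇒ (ii).
   Conversely, under (i), H_1 is nondecreasing, idempotent and has convex range, so it is the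
   clamp to [a, b] = [H_1(⊥), H_1(⊤)].  On [a, b], H_2 is idempotent and, by convexity of its
   sections, fixes every point between its values at the two ends; with monotonicity this
   forces H_2(u, v) = med(u, H_2(a, b), v) for u ≤ v and med(v, H_2(b, a), u) for v ≤ u, i.e.
   H_2 = med(a, B, b) with c = H_2(b, a) and d = H_2(a, b); associativity propagates this to
   all n.  The lattice identities involved are decided by reflection: a Horn clause in meets
   and joins holds in every chain iff it holds in the two-element chain. *)

From mathcomp Require Import all_boot all_order.
Set Implicit Arguments. Unset Strict Implicit. Unset Printing Implicit Defensive.
Import Order.TTheory.
Local Open Scope order_scope.

Inductive lterm := LVar of nat | LMeet of lterm & lterm | LJoin of lterm & lterm.

Fixpoint leval (T : Type) (meet join : T -> T -> T) (env : nat -> T) (t : lterm) : T :=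
  match t with
  | LVar i => env i
  | LMeet u v => meet (leval meet join env u) (leval meet join env v)
  | LJoin u v => join (leval meet join env u) (leval meet join env v)
  end.

Definition beval (v : seq bool) := leval andb orb (nth (head false v) v).

Fixpoint bool_vectors (n : nat) : seq (seq bool) :=
  if n is n'.+1 then [seq b :: v | b <- [:: true; false], v <- bool_vectors n']
  else [:: [::]].

Lemma mem_bool_vectors (v : seq bool) : v \in bool_vectors (size v).
Proof.
elim: v => [|b v IH] //=; have := map_f (cons b) IH.
by case: b => ?; rewrite mem_cat ?cats0; apply/orP; [left|right].
Qed.

(* A Horn clause: hypotheses [p <= q] and a conclusion [p = q] ([true]) or [p <= q] ([false]). *)
Definition horn_bool (n : nat) (hyps : seq (lterm * lterm)) (c : bool * lterm * lterm) : bool :=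
  all (fun v => all (fun h => beval v h.1 ==> beval v h.2) hyps ==>
     (if c.1.1 then beval v c.1.2 == beval v c.2 else beval v c.1.2 ==> beval v c.2))
    (bool_vectors n).

Section ChainLattice.
Variables (d : Order.disp_t) (X : orderType d).

Definition xeval (env : nat -> X) := leval (@Order.meet _ X) (@Order.join _ X) env.

Definition horn (env : nat -> X) (hyps : seq (lterm * lterm)) (c : bool * lterm * lterm) : Prop :=
  foldr (fun h P => xeval env h.1 <= xeval env h.2 -> P)
    (if c.1.1 then xeval env c.1.2 = xeval env c.2 else xeval env c.1.2 <= xeval env c.2) hyps.

Definition holds_at (env : nat -> X) (c : bool * lterm * lterm) (t : X) : bool :=
  if c.1.1 then (t <= xeval env c.1.2) == (t <= xeval env c.2)
  else (t <= xeval env c.1.2) ==> (t <= xeval env c.2).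

Lemma horn_of_thresholds env hyps c :
  (forall t, all (fun h => (t <= xeval env h.1) ==> (t <= xeval env h.2)) hyps ->
     holds_at env c t) ->
  horn env hyps c.
Proof.
elim: hyps => [|h hs IH] /= hc.
  rewrite /horn /=; move: hc; rewrite /holds_at; case: c.1.1 => hc /=.
    apply/le_anti; rewrite -(eqP (hc _ isT)) lexx /=.
    by rewrite (eqP (hc _ isT)) lexx.
  exact: (implyP (hc _ isT)).
move=> le_h; apply: IH => t ht; apply: hc; rewrite ht andbT.
by apply/implyP => /le_trans; apply.
Qed.

Variables (x0 : X) (xs : seq X).

(* Each threshold [t <= _] is a lattice morphism from the chain onto bool, and these
   morphisms jointly detect [<=]: this is why Horn clauses may be checked in bool. *)
Lemma threshold_eval (t : X) (u : lterm) :
  (t <= xeval (nth x0 (x0 :: xs)) u) = beval [seq t <= x | x <- x0 :: xs] u.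
Proof.
set v := [seq t <= x | x <- x0 :: xs].
elim: u => [i|u IHu w IHw|u IHu w IHw] /=; last 2 first.
- by rewrite lexI IHu IHw.
- by rewrite lexU IHu IHw.
rewrite /beval /xeval /= /v; case: (ltnP i (size xs).+1) => hi.
  by rewrite (nth_map x0).
by rewrite !nth_default ?size_map.
Qed.

Lemma horn_bool_sound hyps c : horn_bool (size xs).+1 hyps c -> horn (nth x0 (x0 :: xs)) hyps c.
Proof.
move=> /allP hb; apply: horn_of_thresholds => t ht.
set v := [seq t <= x | x <- x0 :: xs].
have vP : v \in bool_vectors (size xs).+1 by rewrite -(size_map (>= t)) mem_bool_vectors.
have hyps_v : all (fun h => beval v h.1 ==> beval v h.2) hyps.
  by apply: sub_all ht => h; rewrite !threshold_eval.
by have := implyP (hb _ vP) hyps_v; rewrite /holds_at !threshold_eval.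
Qed.
End ChainLattice.

Ltac lat_index x l :=
  lazymatch l with
  | x :: _ => constr:(0%N)
  | _ :: ?r => let n := lat_index x r in constr:(n.+1)
  end.

Ltac lat_atoms t l :=
  lazymatch t with
  | ?u `&` ?v => let l := lat_atoms u l in lat_atoms v l
  | ?u `|` ?v => let l := lat_atoms u l in lat_atoms v l
  | _ => match l with
         | _ => let _ := lat_index t l in l
         | _ => constr:(t :: l)
         end
  end.

Ltac lat_goal_atoms G l :=
  lazymatch G with
  | is_true (?p <= ?q) -> ?G' => let l := lat_atoms p l in let l := lat_atoms q l in
                                 lat_goal_atoms G' l
  | ?u = ?v => let l := lat_atoms u l in lat_atoms v l
  | is_true (?u <= ?v) => let l := lat_atoms u l in lat_atoms v l
  end.

Ltac lat_reify t l :=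
  lazymatch t with
  | ?u `&` ?v => let ru := lat_reify u l in let rv := lat_reify v l in constr:(LMeet ru rv)
  | ?u `|` ?v => let ru := lat_reify u l in let rv := lat_reify v l in constr:(LJoin ru rv)
  | _ => let n := lat_index t l in constr:(LVar n)
  end.

Ltac lat_reify_goal G l :=
  lazymatch G with
  | is_true (?p <= ?q) -> ?G' =>
      let rp := lat_reify p l in let rq := lat_reify q l in
      let r := lat_reify_goal G' l in
      lazymatch r with (?hs, ?c) => constr:(((rp, rq) :: hs, c)) end
  | ?u = ?v => let ru := lat_reify u l in let rv := lat_reify v l in
      constr:(([::] : seq (lterm * lterm), (true, ru, rv)))
  | is_true (?u <= ?v) => let ru := lat_reify u l in let rv := lat_reify v l in
      constr:(([::] : seq (lterm * lterm), (false, ru, rv)))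
  end.

Ltac lat_first_atom t :=
  lazymatch t with
  | ?u `&` _ => lat_first_atom u
  | ?u `|` _ => lat_first_atom u
  | _ => t
  end.

(* Decides implications [p1 <= q1 -> ... -> p = q] (or [-> p <= q]) between
   meet/join terms in a chain. *)
Ltac chain_lattice :=
  try unfold med;
  lazymatch goal with |- ?G =>
    let x := lazymatch G with
             | is_true (?p <= _) -> _ => lat_first_atom p
             | ?u = _ => lat_first_atom u
             | is_true (?u <= _) => lat_first_atom u
             end in
    let T := type of x in
    let l := lat_goal_atoms G (@nil T) in
    let r := lat_reify_goal G l in
    lazymatch r with (?hs, ?c) =>
    lazymatch l with ?x0 :: ?xs =>
      refine (@horn_bool_sound _ _ x0 xs hs c _); vm_compute; reflexivity
    end end
  end.

Section CoreOperation.
Variables (d : Order.disp_t) (X : tbOrderType d).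
Implicit Types (a b c e p q u v w x y : X).

Definition clamp a b x := med a x b.

(* The paper's [d] is called [e] here, [d] being the display of the order. *)
Definition core_op c e x y := (c `&` x) `|` (x `&` y) `|` (e `&` y).

Lemma core_opA c e : associative (core_op c e).
Proof. by move=> x y z; rewrite /core_op; chain_lattice. Qed.

Lemma core_op_idem c e x : core_op c e x x = x.
Proof. rewrite /core_op; chain_lattice. Qed.

Lemma med_between p q x : p <= x -> x <= q -> med p x q = x.
Proof. chain_lattice. Qed.

Lemma med_bot_top x : med \bot x \top = x.
Proof. by rewrite med_between ?le0x ?lex1. Qed.

Lemma clamp_idem a b x : a <= b -> clamp a b (clamp a b x) = clamp a b x.
Proof. rewrite /clamp; chain_lattice. Qed.

Lemma foldl_core_op c e x1 t :
  foldl (core_op c e) x1 t =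
  (c `&` x1) `|` med (\meet_(x <- x1 :: t) x) (c `&` e) (\join_(x <- x1 :: t) x)
    `|` (e `&` last x1 t).
Proof.
elim/last_ind: t => [|t y IH]; first by rewrite big_seq1 big_seq1 /=; chain_lattice.
have m_x1 : \meet_(x <- x1 :: t) x <= x1
  by apply: meets_inf_seq; rewrite ?mem_head.
have m_l : \meet_(x <- x1 :: t) x <= last x1 t
  by apply: meets_inf_seq; rewrite ?mem_last.
have x1_M : x1 <= \join_(x <- x1 :: t) x
  by apply: (@joins_sup_seq _ _ _ _ _ id); rewrite ?mem_head.
have l_M : last x1 t <= \join_(x <- x1 :: t) x
  by apply: (@joins_sup_seq _ _ _ _ _ id); rewrite ?mem_last.
rewrite foldl_rcons IH -rcons_cons !big_rcons /= last_rcons /core_op.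
move: m_x1 m_l x1_M l_M; set m := \meet_(_ <- _) _; set M := \join_(_ <- _) _.
by chain_lattice.
Qed.

Section Clamped.
Variables (a b c e : X).
Hypotheses (le_ac : a <= c) (le_cb : c <= b) (le_ae : a <= e) (le_eb : e <= b).

Lemma clamp_core_opl u v : clamp a b (core_op c e (clamp a b u) v) = clamp a b (core_op c e u v).
Proof. by move: le_ac le_cb le_ae le_eb; rewrite /clamp /core_op; chain_lattice. Qed.

Lemma clamp_core_opr u v : clamp a b (core_op c e u (clamp a b v)) = clamp a b (core_op c e u v).
Proof. by move: le_ac le_cb le_ae le_eb; rewrite /clamp /core_op; chain_lattice. Qed.

Lemma med_clamp_le x y : clamp a b x <= clamp a b y ->
  med (clamp a b x) e (clamp a b y) = clamp a b (core_op c e x y).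
Proof. by move: le_ac le_cb le_ae le_eb; rewrite /clamp /core_op; chain_lattice. Qed.

Lemma med_clamp_ge x y : clamp a b y <= clamp a b x ->
  med (clamp a b y) c (clamp a b x) = clamp a b (core_op c e x y).
Proof. by move: le_ac le_cb le_ae le_eb; rewrite /clamp /core_op; chain_lattice. Qed.
End Clamped.

Definition is_clamp (f : X -> X) := exists p q, p <= q /\ forall x, f x = med p x q.

Lemma is_clamp_id : is_clamp id.
Proof. by exists \bot, \top; split => [|x]; rewrite ?le0x ?med_bot_top. Qed.

Lemma is_clamp_mono f : is_clamp f -> {homo f : x y / x <= y}.
Proof. by move=> [p [q [_ fE]]] x y xy; rewrite !fE; move: xy; chain_lattice. Qed.

Lemma is_clamp_convex f : is_clamp f -> convex_set (fun t => exists x, f x = t).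
Proof.
move=> [p [q [pq fE]]] _ _ t [x <-] [y <-] /ltW xt /ltW ty; exists t.
rewrite fE med_between //; [apply: le_trans xt | apply: le_trans ty _];
  by rewrite fE; move: pq; chain_lattice.
Qed.

Lemma is_clamp_comp g f : {homo g : x y / x <= y} ->
  (forall p q x, p <= q -> g (med p x q) = med (g p) x (g q)) ->
  is_clamp f -> is_clamp (g \o f).
Proof.
move=> g_mono g_med [p [q [pq fE]]]; exists (g p), (g q); split; first exact: g_mono.
by move=> x /=; rewrite fE g_med.
Qed.

Lemma is_clamp_core_opl c e v f : is_clamp f -> is_clamp (fun x => core_op c e (f x) v).
Proof.
apply: (is_clamp_comp (g := core_op c e ^~ v)) => [x y|p q x] /=;
  by rewrite /core_op; chain_lattice.
Qed.

Lemma is_clamp_core_opr c e w f : is_clamp f -> is_clamp (fun x => core_op c e w (f x)).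
Proof.
apply: (is_clamp_comp (g := core_op c e w)) => [x y|p q x] /=;
  by rewrite /core_op; chain_lattice.
Qed.

Lemma is_clamp_clamp a b f : a <= b -> is_clamp f -> is_clamp (fun x => clamp a b (f x)).
Proof.
move=> ab; apply: (is_clamp_comp (g := clamp a b)) => [x y|p q x] /=;
  by move: ab; rewrite /clamp; chain_lattice.
Qed.

Lemma is_clamp_foldl c e f z : is_clamp f -> is_clamp (fun x => foldl (core_op c e) (f x) z).
Proof. by elim: z f => //= y z IH f /(is_clamp_core_opl c e y)/IH. Qed.
End CoreOperation.

Section FoldOperation.
Variables (T : Type) (f : T -> T -> T) (g : T -> T).

Definition fold_op (s : seq T) : option T :=
  if s is x :: t then Some (g (foldl f x t)) else None.

Lemma fold_op_cat_cons y x z :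
  fold_op (y ++ x :: z) =
  Some (g (foldl f (if y is y1 :: ys then f (foldl f y1 ys) x else x) z)).
Proof. by case: y => //= y1 ys; rewrite foldl_cat. Qed.

Hypotheses (fA : associative f) (g_idem : forall x, g (g x) = g x)
  (g_fl : forall x y, g (f (g x) y) = g (f x y))
  (g_fr : forall x y, g (f x (g y)) = g (f x y)).

Lemma foldlA v y ys : foldl f (f v y) ys = f v (foldl f y ys).
Proof. by elim: ys v y => //= z ys IH v y; rewrite IH -fA IH. Qed.

Lemma g_foldl_congr u u' z : g u = g u' -> g (foldl f u z) = g (foldl f u' z).
Proof. by elim: z u u' => //= y z IH u u' gu; apply: IH; rewrite -g_fl gu g_fl. Qed.

Lemma fold_op_assoc : associative_op fold_op.
Proof.
move=> [|x1 xs] [|y1 ys] z //=; rewrite !foldl_cat //=; congr Some.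
  exact: g_foldl_congr (esym (g_idem _)).
by rewrite foldl_cat foldlA; apply: g_foldl_congr (esym (g_fr _ _)).
Qed.

Lemma fold_op_range_idem : (forall x, f x x = x) -> range_idempotent fold_op.
Proof.
move=> f_idem v [[|x t] [_ //= [<-]]] [|k] // _ /=.
by elim: k => [|k IH] //=; rewrite ?g_idem // f_idem.
Qed.
End FoldOperation.

Section MedianForm.
Variables (d : Order.disp_t) (X : tbOrderType d) (H : seq X -> option X).

Lemma condition_iii_fold_op : eps_standard H -> condition_iii H ->
  exists a b c e, [/\ a <= c, c <= b, a <= e, e <= b &
                      forall s, H s = fold_op (core_op c e) (clamp a b) s].
Proof.
move=> [H0 _] [a [b [c [e []]]]]; rewrite lexI leUx => /andP[ac ae] /andP[cb eb] HE.
by exists a, b, c, e; split => // -[|x1 t] //=; rewrite HE foldl_core_op.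
Qed.

Lemma iii_ii : eps_standard H -> condition_iii H -> condition_ii H.
Proof.
move=> He /(condition_iii_fold_op He) [a [b [c [e [ac cb ae eb HE]]]]].
have ab : a <= b := le_trans ac cb.
pose sec y z x := clamp a b (foldl (core_op c e)
  (if y is y1 :: ys then core_op c e (foldl (core_op c e) y1 ys) x else x) z).
have secE y x z : H (y ++ x :: z) = Some (sec y z x) by rewrite HE fold_op_cat_cons.
have sec_clamp y z : is_clamp (sec y z).
  apply: is_clamp_clamp => //; apply: is_clamp_foldl.
  by case: y => [|y1 ys]; [exact: is_clamp_id | exact: (is_clamp_core_opr c e _ (is_clamp_id X))].
have clampK u : clamp a b (clamp a b u) = clamp a b u by rewrite clamp_idem.
have clamp_l := clamp_core_opl ac cb ae eb.
have clamp_r := clamp_core_opr ac cb ae eb.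
split.
- by move=> x y z; rewrite !HE; apply: (fold_op_assoc (core_opA c e) clampK clamp_l clamp_r).
- move=> v [s [sn Hs]] k k_gt0; rewrite HE.
  apply: (fold_op_range_idem clampK (core_op_idem c e) _ k_gt0).
  by exists s; rewrite -HE.
- by move=> y z x x' v v' xx'; rewrite !secE => -[<-] [<-]; apply: is_clamp_mono.
- move=> y z s s' t [x] + [x'] +; rewrite !secE => -[sE] [s'E] st ts'.
  have [u <-] := is_clamp_convex (sec_clamp y z) (ex_intro _ x sE) (ex_intro _ x' s'E) st ts'.
  by exists u; rewrite secE.
Qed.

Lemma ii_i : condition_ii H -> condition_i H.
Proof.
move=> [HA Hidem Hmono Hconv]; split => //.
- by move=> x v Hx; apply: (Hidem v _ 2) => //; exists [:: x].
- by split=> [x x' v v'|x x' z v v'|x x' z v v'];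
    [apply: (Hmono [::] [::]) | apply: (Hmono [::] [:: z]) | apply: (Hmono [:: z] [::])].
Qed.
End MedianForm.

Section ConvexIdempotent.
Variables (d : Order.disp_t) (X : tbOrderType d).

Lemma convex_image_fixed (g : X -> X) u v t :
  convex_set (fun y => exists x, g x = y) -> (forall x, g (g x) = g x) ->
  g u <= t -> t <= g v -> g t = t.
Proof.
move=> conv gK; rewrite le_eqVlt => /orP[/eqP <-|ut]; first by rewrite gK.
rewrite le_eqVlt => /orP[/eqP ->|tv]; first by rewrite gK.
by have [x <-] := conv _ _ _ (ex_intro _ u erefl) (ex_intro _ v erefl) ut tv; rewrite gK.
Qed.

Lemma convex_idempotent_clamp (g : X -> X) : {homo g : x y / x <= y} ->
  (forall x, g (g x) = g x) -> convex_set (fun y => exists x, g x = y) ->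
  forall x, g x = clamp (g \bot) (g \top) x.
Proof.
move=> g_mono gK conv x.
have lo_hi : g \bot <= g \top := g_mono _ _ (le0x _).
have [x_lo|lo_x] := leP x (g \bot).
  have gx_lo : g x <= g \bot by rewrite -[leRHS]gK; apply: g_mono.
  have -> : g x = g \bot by apply/le_anti; rewrite gx_lo g_mono ?le0x.
  by move: x_lo lo_hi; rewrite /clamp; chain_lattice.
have [hi_x|x_hi] := leP (g \top) x.
  have hi_gx : g \top <= g x by rewrite -[leLHS]gK; apply: g_mono.
  have -> : g x = g \top by apply/le_anti; rewrite hi_gx g_mono ?lex1.
  by move: hi_x lo_hi; rewrite /clamp; chain_lattice.
by rewrite (convex_image_fixed conv gK (ltW lo_x) (ltW x_hi)) /clamp med_between ?ltW.
Qed.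

Section IdempotentOperation.
Variables (op : X -> X -> X) (a b : X).
Hypotheses (le_ab : a <= b) (opA : associative op)
  (op_monol : forall z, {homo op^~ z : x y / x <= y})
  (op_monor : forall z, {homo op z : x y / x <= y})
  (op_idem : forall t, a <= t -> t <= b -> op t t = t)
  (op_convexl : forall z, convex_set (fun t => exists x, op x z = t))
  (op_convexr : forall z, convex_set (fun t => exists x, op z x = t)).

Let opaa : op a a = a. Proof. exact: op_idem. Qed.
Let opbb : op b b = b. Proof. exact: op_idem. Qed.

Lemma op_fix_r t : op a b <= t -> t <= b -> op t b = t.
Proof.
move=> abt tb; have gK x : op (op x b) b = op x b by rewrite -opA opbb.
by rewrite -opbb in tb; exact (convex_image_fixed (@op_convexl b) gK abt tb).
Qed.

Lemma op_fix_l t : a <= t -> t <= op a b -> op a t = t.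
Proof.
move=> at_ tab; have gK x : op a (op a x) = op a x by rewrite opA opaa.
by rewrite -{1}opaa in at_; exact (convex_image_fixed (@op_convexr a) gK at_ tab).
Qed.

Lemma op_le_med u v : a <= u -> u <= v -> v <= b -> op u v = med u (op a b) v.
Proof.
move=> au uv vb; set e := op a b.
have ae : a <= e by rewrite -[leLHS]opaa op_monor.
have eb : e <= b by rewrite -[leRHS]opbb op_monol.
have op_left u' v' : e <= u' -> u' <= v' -> v' <= b -> op u' v' = u'.
  move=> eu' u'v' v'b; have u'b := le_trans u'v' v'b.
  apply/le_anti/andP; split.
    by rewrite -[leRHS](op_fix_r eu' u'b) op_monor.
  by rewrite -[leLHS](op_idem (le_trans ae eu') u'b) op_monor.
have op_right u' v' : a <= u' -> u' <= v' -> v' <= e -> op u' v' = v'.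
  move=> au' u'v' v'e; have av' := le_trans au' u'v'.
  apply/le_anti/andP; split.
    by rewrite -[leRHS](op_idem av' (le_trans v'e eb)) op_monol.
  by rewrite -[leLHS](op_fix_l av' v'e) op_monol.
have [eu|ue] := leP e u.
  by rewrite op_left //; move: eu uv; chain_lattice.
have [ve|ev] := leP v e.
  by rewrite op_right //; move: ve uv; chain_lattice.
move: ue ev => /ltW ue /ltW ev.
have -> : op u v = e.
  apply/le_anti/andP; split.
    by rewrite -[leRHS](op_left e v (lexx e) ev vb) op_monol.
  by rewrite -[leLHS](op_right u e au ue (lexx e)) op_monor.
by move: ue ev; chain_lattice.
Qed.
End IdempotentOperation.
End ConvexIdempotent.

Section ConditionI.
Variables (d : Order.disp_t) (X : tbOrderType d) (H : seq X -> option X).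
Hypotheses (H_std : eps_standard H) (H_i : condition_i H).

Definition value (s : seq X) : X := odflt \bot (H s).

Lemma H_value s : s <> [::] -> H s = Some (value s).
Proof. by case: H_std => _ /(_ s) Hs /Hs; rewrite /value; case: (H s). Qed.

Lemma value_assoc x y1 ys z :
  value (x ++ (y1 :: ys) ++ z) = value (x ++ value (y1 :: ys) :: z).
Proof. by case: H_i => HA _ _ _; rewrite /value HA (H_value (s := y1 :: ys)). Qed.

Let h x := value [:: x].
Let op x y := value [:: x; y].

Let h_idem x : h (h x) = h x.
Proof. exact (esym (value_assoc [::] x [::] [::])). Qed.
Let h_op x y : h (op x y) = op x y.
Proof. exact (esym (value_assoc [::] x [:: y] [::])). Qed.
Let op_hl x y : op (h x) y = op x y.
Proof. exact (esym (value_assoc [::] x [::] [:: y])). Qed.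
Let op_hr x y : op x (h y) = op x y.
Proof. exact (esym (value_assoc [:: x] y [::] [::])). Qed.
Let opA : associative op.
Proof.
move=> x y z.
by rewrite /op -(value_assoc [:: x] y [:: z] [::]) -(value_assoc [::] x [:: y] [:: z]).
Qed.

Let h_mono : {homo h : x y / x <= y}.
Proof. by case: H_i => _ _ [mono _ _] _ x y xy; apply: mono xy (H_value _) (H_value _). Qed.
Let op_monol z : {homo op^~ z : x y / x <= y}.
Proof. by case: H_i => _ _ [_ mono _] _ x y xy; apply: mono xy (H_value _) (H_value _). Qed.
Let op_monor z : {homo op z : x y / x <= y}.
Proof. by case: H_i => _ _ [_ _ mono] _ x y xy; apply: mono xy (H_value _) (H_value _). Qed.

Lemma value_section_convex y z : convex_set (section_set H y z) ->
  convex_set (fun t => exists x, value (y ++ x :: z) = t).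
Proof.
have secE x t : H (y ++ x :: z) = Some t <-> value (y ++ x :: z) = t.
  by rewrite H_value; [split => [[]|<-] | case: y].
move=> conv s s' t [x /secE sx] [x' /secE s'x'] st ts'.
by have [u /secE] := conv s s' t (ex_intro _ x sx) (ex_intro _ x' s'x') st ts'; exists u.
Qed.

Let h_convex : convex_set (fun t => exists x, h x = t).
Proof. by case: H_i => _ _ _ [conv _ _]; apply: value_section_convex conv. Qed.
Let op_convexl z : convex_set (fun t => exists x, op x z = t).
Proof. by case: H_i => _ _ _ [_ conv _]; apply: value_section_convex (conv z). Qed.
Let op_convexr z : convex_set (fun t => exists x, op z x = t).
Proof. by case: H_i => _ _ _ [_ _ conv]; apply: value_section_convex (conv z). Qed.

Let a := h \bot.
Let b := h \top.
Let c := op b a.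
Let e := op a b.

Let le_ab : a <= b. Proof. exact: h_mono (le0x _). Qed.

Let h_clamp x : h x = clamp a b x.
Proof. exact: convex_idempotent_clamp h_mono h_idem h_convex x. Qed.

Let op_range x y : a <= op x y /\ op x y <= b.
Proof. by rewrite -h_op h_clamp /clamp; split; move: le_ab; chain_lattice. Qed.

Let op_idem t : a <= t -> t <= b -> op t t = t.
Proof.
move=> at_ tb; case: H_i => _ idem _ _.
have Ht : H [:: t] = Some t by rewrite H_value // -/(h t) h_clamp /clamp med_between.
by have := idem _ _ Ht; rewrite H_value // => -[].
Qed.

Let le_ac : a <= c. Proof. by case: (op_range b a). Qed.
Let le_cb : c <= b. Proof. by case: (op_range b a). Qed.
Let le_ae : a <= e. Proof. by case: (op_range a b). Qed.
Let le_eb : e <= b. Proof. by case: (op_range a b). Qed.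

Let op_clamp x y : op x y = clamp a b (core_op c e x y).
Proof.
have opA' : associative (fun x y => op y x) by move=> ? ? ?; rewrite opA.
rewrite -op_hl -op_hr !h_clamp.
have clamp_in w : a <= clamp a b w /\ clamp a b w <= b.
  by rewrite /clamp; split; move: le_ab; chain_lattice.
have [[au ub] [av vb]] := (clamp_in x, clamp_in y).
have [uv|/ltW vu] := leP (clamp a b x) (clamp a b y).
  rewrite (op_le_med le_ab opA op_monol op_monor op_idem op_convexl op_convexr au uv vb).
  exact: med_clamp_le.
rewrite (op_le_med le_ab opA' op_monor op_monol op_idem op_convexr op_convexl av vu ub).
exact: med_clamp_ge.
Qed.

Lemma H_clamp_foldl x1 t : H (x1 :: t) = Some (clamp a b (foldl (core_op c e) x1 t)).
Proof.
elim/last_ind: t => [|t y IH]; first by rewrite H_value // -h_clamp.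
rewrite -rcons_cons H_value // -cats1 -[_ ++ _]cat0s value_assoc /= -/(op _ y).
by rewrite /value IH /= -/(op _ y) op_clamp clamp_core_opl // foldl_rcons.
Qed.

Lemma i_iii : condition_iii H.
Proof.
exists a, b, c, e; split; rewrite ?lexI ?leUx ?le_ac ?le_ae ?le_cb ?le_eb // => x1 t.
by rewrite H_clamp_foldl foldl_core_op.
Qed.
End ConditionI.

Theorem proposition5p7 (d : Order.disp_t) (X : tbOrderType d) (H : seq X -> option X) :
  eps_standard H ->
  [<-> condition_i H; condition_ii H; condition_iii H].
Proof.
move=> H_std; split => [/(i_iii H_std)/(iii_ii H_std) //|].
by split => [/ii_i/(i_iii H_std) | /(iii_ii H_std)/ii_i].
Qed.
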